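(* For all $\phi\in\mathcal{L}_{\Box\!\!\rightarrow}$ and $\psi\in\mathcal{L}_\Box$: $\psi\in\mathsf{FSK}^d$ iff $Tr_\phi(\psi)\in\mathsf{N4CK}$.
   Context: $\mathcal{L}_\Box$ is built from propositional variables with $\wedge,\vee,\to$, strong negation $\sim$, and a unary modality $\Box$; $\mathcal{L}_{\Box\!\!\rightarrow}$ is built likewise but with a binary would-conditional $\Box\!\!\rightarrow$ instead of $\Box$. $\mathsf{FSK}^d$ (Odintsov–Wansing) is the modal logic over $\mathcal{L}_\Box$ given by Nelsonian modal models $(W,\leq,R,V^+,V^-)$: $\leq$ a preorder, $V^\pm$ assigning upward-closed sets, $R\subseteq W\times W$ with (i) $w\leq w'$ and $R(w,v)$ imply $R(w',v')$ for some $v'\geq v$, (ii) $R(w,v)$ and $v\leq v'$ imply $R(w',v')$ for some $w'\geq w$; verification/falsification as in Nelson's logic $\mathsf{N4}$ (atoms by $V^\pm$; $\wedge$ verified iff both verified, falsified iff one falsified; $\vee$ dually; $\sim$ swaps; $w\models^+\psi\to\chi$ iff for all $v\geq w$, $v\models^+\psi$ implies $v\models^+\chi$; $w\models^-\psi\to\chi$ iff $w\models^+\psi$ and $w\models^-\chi$), plus $w\models^+\Box\psi$ iff for all $v\geq w$ and $u$ with $R(v,u)$, $u\models^+\psi$, and $w\models^-\Box\psi$ iff some $u$ has $R(w,u)$ and $u\models^-\psi$; validity means verification everywhere. $\mathsf{N4CK}$ is the analogous conditional logic over $\mathcal{L}_{\Box\!\!\rightarrow}$: models $(W,\leq,R,V^+,V^-)$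 with $R\subseteq W\times(\mathcal{P}(W)\times\mathcal{P}(W))\times W$ satisfying (i),(ii) for each $R_{(X,Y)}$; $w\models^+\psi\Box\!\!\rightarrow\chi$ iff for all $v\geq w$ and $u$ with $R_{\|\psi\|}(v,u)$, $u\models^+\chi$; $w\models^-\psi\Box\!\!\rightarrow\chi$ iff some $u$ has $R_{\|\psi\|}(w,u)$ and $u\models^-\chi$, where $\|\psi\|=(\{w\mid w\models^+\psi\},\{w\mid w\models^-\psi\})$. For fixed $\phi\in\mathcal{L}_{\Box\!\!\rightarrow}$, $Tr_\phi:\mathcal{L}_\Box\to\mathcal{L}_{\Box\!\!\rightarrow}$ is defined by $Tr_\phi(p)=p$, $Tr_\phi(\sim\psi)=\sim Tr_\phi(\psi)$, $Tr_\phi(\psi\ast\chi)=Tr_\phi(\psi)\ast Tr_\phi(\chi)$ for $\ast\in\{\wedge,\vee,\to\}$, and $Tr_\phi(\Box\psi)=\phi\Box\!\!\rightarrow Tr_\phi(\psi)$. *)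

Set Implicit Arguments.

(* L_Box : propositional variables (nat), /\, \/, ->, strong negation ~, Box *)
Inductive fmB : Type :=
| BVar : nat -> fmB
| BAnd : fmB -> fmB -> fmB
| BOr  : fmB -> fmB -> fmB
| BImp : fmB -> fmB -> fmB
| BNeg : fmB -> fmB
| BBox : fmB -> fmB.

Inductive fmC : Type :=
| CVar : nat -> fmC
| CAnd : fmC -> fmC -> fmC
| COr  : fmC -> fmC -> fmC
| CImp : fmC -> fmC -> fmC
| CNeg : fmC -> fmC
| CCond : fmC -> fmC -> fmC.

Fixpoint Tr (phi : fmC) (psi : fmB) : fmC :=
  match psi with
  | BVar p => CVar p
  | BAnd a b => CAnd (Tr phi a) (Tr phi b)
  | BOr a b => COr (Tr phi a) (Tr phi b)
  | BImp a b => CImp (Tr phi a) (Tr phi b)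
  | BNeg a => CNeg (Tr phi a)
  | BBox a => CCond phi (Tr phi a)
  end.

Record NModel : Type := {
  nW : Type;
  nle : nW -> nW -> Prop;
  nR : nW -> nW -> Prop;
  nVp : nat -> nW -> Prop;
  nVm : nat -> nW -> Prop;
  nle_refl : forall w, nle w w;
  nle_trans : forall u v w, nle u v -> nle v w -> nle u w;
  nVp_up : forall p w v, nle w v -> nVp p w -> nVp p v;
  nVm_up : forall p w v, nle w v -> nVm p w -> nVm p v;
  nR_i : forall w w' v, nle w w' -> nR w v -> exists v', nle v v' /\ nR w' v';
  nR_ii : forall w v v', nR w v -> nle v v' -> exists w', nle w w' /\ nR w' v'
}.

(* sat M true = verification (|=+), sat M false = falsification (|=-) *)
Fixpoint nsat (M : NModel) (pos : bool) (a : fmB) (w : nW M) : Prop :=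
  match a with
  | BVar p => if pos then nVp M p w else nVm M p w
  | BAnd a b => if pos then nsat M true a w /\ nsat M true b w
                else nsat M false a w \/ nsat M false b w
  | BOr a b => if pos then nsat M true a w \/ nsat M true b w
               else nsat M false a w /\ nsat M false b w
  | BImp a b => if pos then
                  forall v, nle M w v -> nsat M true a v -> nsat M true b v
                else nsat M true a w /\ nsat M false b w
  | BNeg a => nsat M (negb pos) a w
  | BBox a => if pos then
                forall v u, nle M w v -> nR M v u -> nsat M true a u
              else exists u, nR M w u /\ nsat M false a u
  end.

Definition FSKd_valid (a : fmB) : Prop :=
  forall (M : NModel) (w : nW M), nsat M true a w.

(* Subsets of W are represented as predicates W -> Prop; the relation R is
   required to depend only on the extensions of the indexing pair, so that it
   is genuinely indexed by P(W) x P(W). *)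
Record CModel : Type := {
  cW : Type;
  cle : cW -> cW -> Prop;
  cR : (cW -> Prop) * (cW -> Prop) -> cW -> cW -> Prop;
  cVp : nat -> cW -> Prop;
  cVm : nat -> cW -> Prop;
  cle_refl : forall w, cle w w;
  cle_trans : forall u v w, cle u v -> cle v w -> cle u w;
  cVp_up : forall p w v, cle w v -> cVp p w -> cVp p v;
  cVm_up : forall p w v, cle w v -> cVm p w -> cVm p v;
  cR_ext : forall (X Y X' Y' : cW -> Prop) w v,
      (forall x, X x <-> X' x) -> (forall y, Y y <-> Y' y) ->
      cR (X, Y) w v -> cR (X', Y') w v;
  cR_i : forall XY w w' v, cle w w' -> cR XY w v ->
      exists v', cle v v' /\ cR XY w' v';
  cR_ii : forall XY w v v', cR XY w v -> cle v v' ->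
      exists w', cle w w' /\ cR XY w' v'
}.

Fixpoint csat (M : CModel) (pos : bool) (a : fmC) (w : cW M) : Prop :=
  match a with
  | CVar p => if pos then cVp M p w else cVm M p w
  | CAnd a b => if pos then csat M true a w /\ csat M true b w
                else csat M false a w \/ csat M false b w
  | COr a b => if pos then csat M true a w \/ csat M true b w
               else csat M false a w /\ csat M false b w
  | CImp a b => if pos then
                  forall v, cle M w v -> csat M true a v -> csat M true b v
                else csat M true a w /\ csat M false b w
  | CNeg a => csat M (negb pos) a w
  | CCond a b => if pos then
                   forall v u, cle M w v ->
                     cR M (csat M true a, csat M false a) v u -> csat M true b u
                 else exists u, cR M (csat M true a, csat M false a) w u
                                /\ csat M false b u
  end.

Definition N4CK_valid (a : fmC) : Prop :=
  forall (M : CModel) (w : cW M), csat M true a w.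

From Stdlib Require Import Setoid.

(* A conditional model M evaluates [Tr phi psi] exactly as the FSK^d model
   obtained from M by keeping only the relation R_||phi|| evaluates psi, and
   every FSK^d model arises in this way from the conditional model whose
   relation ignores its index.  Both facts are instances of one truth lemma:
   [Tr phi] preserves verification and falsification along any bisimulation
   between an FSK^d model and the R_||phi||-reduct of a conditional model. *)

Section Bisimulation.
Variables (phi : fmC) (N : NModel) (M : CModel) (Z : nW N -> cW M -> Prop).

Let Rphi := cR M (csat M true phi, csat M false phi).

Hypothesis Z_Vp : forall p w x, Z w x -> (nVp N p w <-> cVp M p x).
Hypothesis Z_Vm : forall p w x, Z w x -> (nVm N p w <-> cVm M p x).
Hypothesis Z_le_forth :
  forall {w x v}, Z w x -> nle N w v -> exists y, cle M x y /\ Z v y.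
Hypothesis Z_le_back :
  forall {w x y}, Z w x -> cle M x y -> exists v, nle N w v /\ Z v y.
Hypothesis Z_R_forth :
  forall {w x v}, Z w x -> nR N w v -> exists y, Rphi x y /\ Z v y.
Hypothesis Z_R_back :
  forall {w x y}, Z w x -> Rphi x y -> exists v, nR N w v /\ Z v y.

Lemma bisim_Tr_sat (a : fmB) :
  forall pos w x, Z w x -> (nsat N pos a w <-> csat M pos (Tr phi a) x).
Proof.
  induction a as [p | a IHa b IHb | a IHa b IHb | a IHa b IHb | a IHa | a IHa];
    intros [|] w x Hwx; simpl.
  - now apply Z_Vp.
  - now apply Z_Vm.
  - now rewrite (IHa true w x), (IHb true w x).
  - now rewrite (IHa false w x), (IHb false w x).
  - now rewrite (IHa true w x), (IHb true w x).
  - now rewrite (IHa false w x), (IHb false w x).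
  - split.
    + intros H y Hxy Ha.
      destruct (Z_le_back Hwx Hxy) as [v [Hwv Hvy]].
      apply (IHb true v y Hvy), H; [exact Hwv |].
      now apply (IHa true v y Hvy).
    + intros H v Hwv Ha.
      destruct (Z_le_forth Hwx Hwv) as [y [Hxy Hvy]].
      apply (IHb true v y Hvy), H; [exact Hxy |].
      now apply (IHa true v y Hvy).
  - now rewrite (IHa true w x), (IHb false w x).
  - now apply IHa.
  - now apply IHa.
  - split.
    + intros H y z Hxy Hyz.
      destruct (Z_le_back Hwx Hxy) as [v [Hwv Hvy]].
      destruct (Z_R_back Hvy Hyz) as [u [Hvu Huz]].
      apply (IHa true u z Huz), (H v u Hwv Hvu).
    + intros H v u Hwv Hvu.
      destruct (Z_le_forth Hwx Hwv) as [y [Hxy Hvy]].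
      destruct (Z_R_forth Hvy Hvu) as [z [Hyz Huz]].
      apply (IHa true u z Huz), (H y z Hxy Hyz).
  - split.
    + intros [u [Hwu Hu]].
      destruct (Z_R_forth Hwx Hwu) as [z [Hxz Huz]].
      exists z. split; [exact Hxz |]. now apply (IHa false u z Huz).
    + intros [z [Hxz Hz]].
      destruct (Z_R_back Hwx Hxz) as [u [Hwu Huz]].
      exists u. split; [exact Hwu |]. now apply (IHa false u z Huz).
Qed.

End Bisimulation.

Definition cond_to_modal (phi : fmC) (M : CModel) : NModel :=
  {| nW := cW M; nle := cle M;
     nR := cR M (csat M true phi, csat M false phi);
     nVp := cVp M; nVm := cVm M;
     nle_refl := cle_refl M; nle_trans := cle_trans M;
     nVp_up := cVp_up M; nVm_up := cVm_up M;
     nR_i := fun w w' v => cR_i M _ w w' v;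
     nR_ii := fun w v v' => cR_ii M _ w v v' |}.

Definition modal_to_cond (N : NModel) : CModel :=
  {| cW := nW N; cle := nle N; cR := fun _ => nR N;
     cVp := nVp N; cVm := nVm N;
     cle_refl := nle_refl N; cle_trans := nle_trans N;
     cVp_up := nVp_up N; cVm_up := nVm_up N;
     cR_ext := fun _ _ _ _ w v _ _ H => H;
     cR_i := fun _ w w' v => nR_i N w w' v;
     cR_ii := fun _ w v v' => nR_ii N w v v' |}.

Lemma cond_to_modal_sat (phi : fmC) (M : CModel) (a : fmB) pos (w : cW M) :
  nsat (cond_to_modal phi M) pos a w <-> csat M pos (Tr phi a) w.
Proof.
  apply bisim_Tr_sat with (Z := eq); intros; subst; eauto; reflexivity.
Qed.

Lemma modal_to_cond_sat (phi : fmC) (N : NModel) (a : fmB) pos (w : nW N) :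
  nsat N pos a w <-> csat (modal_to_cond N) pos (Tr phi a) w.
Proof.
  apply bisim_Tr_sat with (Z := eq); intros; subst; eauto; reflexivity.
Qed.

Theorem lemma16 (phi : fmC) (psi : fmB) :
  FSKd_valid psi <-> N4CK_valid (Tr phi psi).
Proof.
  split.
  - intros Hvalid M w.
    apply cond_to_modal_sat, Hvalid.
  - intros Hvalid N w.
    apply (modal_to_cond_sat phi), Hvalid.
Qed.
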